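(* For $N>0$ let $\mathcal{R}_N=\{(x,y)\in\mathbb{R}^2:|A(x,y)|\le(N/4)^{1/3},\ |B(x,y)|\le(N/27)^{1/2}\}$ and $V=\mathrm{Vol}(\mathcal{R}_1)$. Then $\mathcal{R}_N=\{(N^{\frac{\tau}{6\varsigma}}x,N^{\frac{1}{6\varsigma}}y):(x,y)\in\mathcal{R}_1\}$, $\mathcal{R}_1$ is bounded, and $\mathrm{Vol}(\mathcal{R}_N)=N^{\frac{\tau+1}{6\varsigma}}V$. In particular every $(x,y)\in\mathcal{R}_N$ satisfies $x\ll N^{\frac{\tau}{6\varsigma}}$ and $y\ll N^{\frac{1}{6\varsigma}}$, with implied constants depending only on $\mathcal{R}_1$.
   Context: Fix $\upsilon\in\{1,2\}$ and positive integers $m,\tau$ with $m=1$ or $\upsilon\tau=1$. Let $f,g\in\mathbb{Z}[t]$ with $4f^3+27g^2\ne0$, no common real root, and $\max\{\frac12\deg f,\frac13\deg g\}=\frac{2m}{\upsilon\tau}$. Let $\varsigma=2m$ if $\upsilon=1$, $\varsigma=1$ if $\upsilon=2$; $A(x,y)=y^{2\varsigma}f(x/y^\tau)$, $B(x,y)=y^{3\varsigma}g(x/y^\tau)\in\mathbb{Z}[x,y]$. *)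

From HB Require Import structures.
From mathcomp Require Import all_boot all_order all_algebra.
From mathcomp Require Import all_classical all_reals all_analysis.
Set Implicit Arguments. Unset Strict Implicit. Unset Printing Implicit Defensive.
Import Order.TTheory GRing.Theory Num.Theory.
Local Open Scope classical_set_scope.
Local Open Scope ring_scope.

Definition pdeg (p : {poly int}) : rat := ((size p).-1)%:R.

(* max{ deg f / 2, deg g / 3 }, with the convention deg 0 = -oo
   (f = g = 0 is excluded by 4f^3+27g^2 <> 0) *)
Definition maxdeg (f g : {poly int}) : rat :=
  if f == 0 then pdeg g / 3%:R
  else if g == 0 then pdeg f / 2%:R
  else Num.max (pdeg f / 2%:R) (pdeg g / 3%:R).

Definition vsig (u m : nat) : nat := if u == 1%N then (2 * m)%N else 1%N.

(* The polynomial y^(k*s) p(x / y^t), written as the bivariate polynomial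
   sum_i p_i x^i y^(k*s - t*i) and evaluated at real (x, y).  Under the
   degree hypothesis, k*s - t*i >= 0 for every i <= deg p, so this is the
   genuine element of Z[x,y] (and equals y^(k*s) p(x/y^t) whenever y <> 0). *)
Definition homog {R : realType} (k s t : nat) (p : {poly int}) (x y : R) : R :=
  \sum_(i < size p) (p`_i)%:~R * x ^+ i * y ^+ (k * s - t * i).

Definition Aform {R : realType} (s t : nat) (f : {poly int}) (x y : R) : R :=
  homog 2 s t f x y.
Definition Bform {R : realType} (s t : nat) (g : {poly int}) (x y : R) : R :=
  homog 3 s t g x y.

Definition regionN {R : realType} (s t : nat) (f g : {poly int}) (N : R)
  : set (R * R) :=
  [set p | `|Aform s t f p.1 p.2| <= (N / 4) `^ (1 / 3)
         /\ `|Bform s t g p.1 p.2| <= (N / 27) `^ (1 / 2)].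

Definition Vol {R : realType} (A : set (R * R)) : \bar R :=
  ((@lebesgue_measure R) \x (@lebesgue_measure R))%E A.

From HB Require Import structures.
From mathcomp Require Import all_boot all_order all_algebra.
From mathcomp Require Import all_classical all_reals all_analysis.
From mathcomp Require Import ring lra zify.
Import Order.TTheory GRing.Theory Num.Theory.
Local Open Scope classical_set_scope.
Local Open Scope ring_scope.

(* A and B are weighted homogeneous: giving x weight t and y weight 1,
   A(l^t x, l y) = l^(2s) A(x, y) and B(l^t x, l y) = l^(3s) B(x, y).  For
   l = N^(1/(6s)) this turns the inequalities defining R_N into those defining
   R_1, so R_N is the image of R_1 under diag(l^t, l), of determinant
   N^((t+1)/(6s)).  For boundedness, one of the two forms, P = y^(ks) p(x/y^t),
   has full weight t deg p = ks.  On y = 0 it reduces to lc(p) x^(deg p), which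
   bounds x.  Otherwise write x = r y^t: for |r| large the leading term of p
   dominates, bounding x and then y since |y|^t <= |x|; for |r| in a compact
   interval, |p(r)| + |q(r)| stays away from 0 because f and g have no common
   real root, which bounds y and then x. *)

Lemma ler_natdiv (F : numFieldType) (a b c d : nat) : (0 < b)%N -> (0 < d)%N ->
  (a%:R / b%:R <= c%:R / d%:R :> F) = (a * d <= c * b)%N.
Proof.
move=> b0 d0; rewrite ler_pdivrMr ?ltr0n // mulrAC ler_pdivlMr ?ltr0n //.
by rewrite -!natrM ler_nat.
Qed.

Lemma eqr_natdiv (F : numFieldType) (a b c d : nat) : (0 < b)%N -> (0 < d)%N ->
  (a%:R / b%:R == c%:R / d%:R :> F) = (a * d == c * b)%N.
Proof. by move=> b0 d0; rewrite eq_le !ler_natdiv // eqn_leq. Qed.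

Section RealField.
Context {R : realFieldType}.

Lemma exprn_le_bound (z C : R) n : 0 <= z -> (0 < n)%N -> z ^+ n <= C -> z <= 1 + `|C|.
Proof.
move=> z0 n0 zC; have [z1|z1] := leP z 1; first by rewrite ler_wpDr.
apply: le_trans (ler_eXnr n0 (ltW z1)) _.
by rewrite (le_trans zC) // (le_trans (ler_norm C)) // lerDr.
Qed.

(* |P(r)| >= |lc P| |r|^d - S |r|^(d-1), where S is the sum of the other
   coefficients' norms; the error term is absorbed once |r| >= 2 S / |lc P|. *)
Lemma poly_lead_dominates {P : {poly R}} : P != 0 ->
  exists2 K, 1 <= K & forall r, K <= `|r| ->
    `|lead_coef P| / 2 * `|r| ^+ (size P).-1 <= `|P.[r]|.
Proof.
move=> P0; set d := (size P).-1; set l := `|lead_coef P|.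
have sP : size P = d.+1 by rewrite prednK // size_poly_gt0.
have l0 : 0 < l by rewrite normr_gt0 lead_coef_eq0.
pose S := \sum_(i < d) `|P`_i|.
have S0 : 0 <= S by apply: sumr_ge0.
have KS : 0 <= 2 * S / l by rewrite divr_ge0 ?mulr_ge0 // ltW.
exists (1 + 2 * S / l) => [|r Kr]; first by rewrite lerDl.
have r1 : 1 <= `|r| by rewrite (le_trans _ Kr) // lerDl.
have r0 : 0 < `|r| by rewrite (lt_le_trans ltr01).
set Q := \sum_(i < d) P`_i * r ^+ i.
have PE : P.[r] = Q + lead_coef P * r ^+ d.
  by rewrite horner_coef sP big_ord_recr lead_coefE.
have QS : `|Q| <= S / `|r| * `|r| ^+ d.
  rewrite -mulrA mulr_suml.
  apply: le_trans (ler_norm_sum _ _ _) (ler_sum _ _) => i _.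
  rewrite normrM normrX ler_wpM2l // mulrC ler_pdivlMr // -exprSr.
  exact: ler_weXn2l.
have Sl : S / `|r| <= l / 2.
  have : 2 * S / l <= `|r| by rewrite (le_trans _ Kr) // lerDr.
  by rewrite !ler_pdivrMr // => ?; lra.
have := ler_normB P.[r] Q; rewrite PE addrC addKr normrM normrX -/l.
have := ler_wpM2r (exprn_ge0 d (normr_ge0 r)) Sl.
lra.
Qed.

End RealField.

Lemma maxdeg_vsig {u m t : nat} : (u == 1%N) || (u == 2%N) ->
  (m == 1%N) || (u * t == 1)%N -> (0 < t)%N ->
  (2 * m)%:R / (u * t)%:R = (vsig u m)%:R / t%:R :> rat.
Proof.
rewrite /vsig => hu hm t0; case/orP: hu hm => /eqP -> /= hm.
all: by apply/eqP; rewrite eqr_natdiv ?muln_gt0 //; lia.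
Qed.

(* The weights are t for x and 1 for y, so maxdeg f g = s / t says that
   A = y^(2s) f(x/y^t) and B = y^(3s) g(x/y^t) are polynomials, at least one
   of which attains its full weight. *)
Lemma maxdeg_weights {f g : {poly int}} {s t : nat} : (0 < s)%N -> (0 < t)%N ->
  maxdeg f g = s%:R / t%:R ->
  [/\ (t * (size f).-1 <= 2 * s)%N, (t * (size g).-1 <= 3 * s)%N &
      (t * (size f).-1 = 2 * s)%N \/ (t * (size g).-1 = 3 * s)%N].
Proof.
move=> s0 t0; rewrite /maxdeg /pdeg.
have [-> | _] := eqVneq f 0.
  by rewrite size_poly0 => /eqP; rewrite eqr_natdiv // => /eqP ew; split; lia.
have [-> | _] := eqVneq g 0.
  by rewrite size_poly0 => /eqP; rewrite eqr_natdiv // => /eqP ew; split; lia.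
move=> hmax.
have /andP[lef leg] : ((size f).-1%:R / 2%:R <= s%:R / t%:R :> rat)
                   && ((size g).-1%:R / 3%:R <= s%:R / t%:R :> rat).
  by rewrite -hmax !le_max !lexx orbT.
rewrite !ler_natdiv // in lef leg; split; [lia | lia |].
move: hmax; rewrite /Order.max.
by case: ifP => _ /eqP; rewrite eqr_natdiv // => /eqP ew; lia.
Qed.

Section Forms.
Context {R : realType}.
Implicit Types (p : {poly int}) (x y : R).

Lemma homog_scale k s t p (l x y : R) : (t * (size p).-1 <= k * s)%N ->
  homog k s t p (l ^+ t * x) (l * y) = l ^+ (k * s) * homog k s t p x y.
Proof.
move=> hp; rewrite /homog mulr_sumr; apply: eq_bigr => i _.
have hi : (t * i <= k * s)%N.
  rewrite (leq_trans _ hp) // leq_mul2l -ltnS prednK ?ltn_ord ?orbT //.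
  exact: leq_ltn_trans _ (ltn_ord i).
rewrite !exprMn -!exprM -[in RHS](subnKC hi) addKn exprD; ring.
Qed.

Lemma homog_y1 k s t p x : homog k s t p x 1 = (map_poly intr p).[x].
Proof.
rewrite /homog horner_coef size_map_inj_poly //; last exact: intr_inj.
by apply: eq_bigr => i _; rewrite expr1n mulr1 coef_map.
Qed.

Lemma homog_dehomogenize k s t p x y : (t * (size p).-1 <= k * s)%N -> y != 0 ->
  homog k s t p x y = y ^+ (k * s) * (map_poly intr p).[x / y ^+ t].
Proof.
move=> hp y0; rewrite -(homog_y1 k s t) -homog_scale // mulr1.
by rewrite mulrC divfK // expf_neq0.
Qed.

Lemma homog_y0 k s t p x : (t * (size p).-1 = k * s)%N -> (0 < k * s)%N ->
  homog k s t p x 0 = (lead_coef p)%:~R * x ^+ (size p).-1.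
Proof.
move=> hp ks0; have t0 : (0 < t)%N by move: ks0; rewrite -hp muln_gt0 => /andP[].
have [d sp] : exists d, size p = d.+1.
  by move: ks0; rewrite -hp; case: (size p) => [|d]; [rewrite muln0 | exists d].
rewrite /homog sp big_ord_recr big1 /= ?add0r => [|i _].
  by rewrite lead_coefE sp -hp sp subnn mulr1.
rewrite expr0n (gtn_eqF (_ : 0 < _)%N) ?mulr0 //.
by rewrite -hp sp subn_gt0 ltn_mul2l t0 ltn_ord.
Qed.

End Forms.

Section Boundedness.
Context {R : realType}.

Lemma no_common_root_lbound {P Q : {poly R}} (K : R) :
  (forall r, ~ (root P r /\ root Q r)) ->
  exists2 d, 0 < d & forall r, `|r| <= K -> d <= `|P.[r]| + `|Q.[r]|.
Proof.
move=> PQ; have [K0|K0] := ltP K 0.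
  by exists 1 => // r /le_lt_trans /(_ K0); rewrite normr_lt0.
have cPQ : {within `[- K, K], continuous (fun r => `|P.[r]| + `|Q.[r]|)}.
  apply: continuous_subspaceT => r.
  by apply: cvgD; apply: cvg_norm; apply: continuous_horner.
have [r0 _ r0_min] := EVT_min (ge0_cp K0).2 cPQ.
have PQ0 : 0 < `|P.[r0]| + `|Q.[r0]|.
  rewrite lt_neqAle addr_ge0 // andbT eq_sym paddr_eq0 // !normr_eq0.
  by apply/negP => /andP[/eqP P0 /eqP Q0]; apply: (PQ r0); split; apply/rootP.
by exists (`|P.[r0]| + `|Q.[r0]|) => // r rK; apply: r0_min; rewrite in_itv /= -ler_norml.
Qed.

Lemma dehomog_bounded_near {P Q : {poly R}} {a b : nat} (t : nat) (c c' K : R) :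
  (0 < a)%N -> (0 < b)%N -> (forall r, ~ (root P r /\ root Q r)) ->
  exists M, forall r y, `|r| <= K ->
    `|y| ^+ a * `|P.[r]| <= c -> `|y| ^+ b * `|Q.[r]| <= c' ->
    `|r * y ^+ t| <= M /\ `|y| <= M.
Proof.
move=> a0 b0 PQ; have [d d0 dPQ] := no_common_root_lbound K PQ.
have y_bound e v w (y : R) : (0 < e)%N -> d / 2 <= v -> `|y| ^+ e * v <= w ->
    `|y| <= 1 + `|2 * w / d|.
  move=> e0 dv yw; apply: exprn_le_bound e0 _ => //.
  rewrite ler_pdivlMr //; have := ler_wpM2l (exprn_ge0 e (normr_ge0 y)) dv; lra.
pose My := 1 + `|2 * c / d| + `|2 * c' / d|.
have My0 : 0 <= My by rewrite addr_ge0 // ler_wpDr.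
exists (Num.max My (K * My ^+ t)) => r y rK yP yQ.
have yM : `|y| <= My.
  rewrite /My; have := dPQ r rK; have [dP _|Pd dQ] := leP (d / 2) `|P.[r]|.
    have := y_bound _ _ _ y a0 dP yP; have := normr_ge0 (2 * c' / d); lra.
  have dQ' : d / 2 <= `|Q.[r]| by lra.
  have := y_bound _ _ _ y b0 dQ' yQ; have := normr_ge0 (2 * c / d); lra.
rewrite !le_max yM; split=> //; apply/orP; right.
rewrite normrM normrX ler_pM ?exprn_ge0 //.
by rewrite lerXn2r // nnegrE.
Qed.

Lemma dehomog_bounded_far {P : {poly R}} (t : nat) (c : R) :
  (0 < t)%N -> (0 < (size P).-1)%N ->
  exists K M, forall r y, K <= `|r| ->
    `|y| ^+ (t * (size P).-1) * `|P.[r]| <= c -> `|r * y ^+ t| <= M /\ `|y| <= M.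
Proof.
move=> t0 n0; have P0 : P != 0 by rewrite -size_poly_gt0 (leq_trans n0) // leq_pred.
have [K K1 PK] := poly_lead_dominates P0.
set n := (size P).-1 in n0 PK *; set l := `|lead_coef P| in PK.
have l0 : 0 < l by rewrite normr_gt0 lead_coef_eq0.
pose Mx := 1 + `|2 * c / l|.
exists K, (Num.max Mx (1 + `|Mx|)) => r y rK yP.
have xM : `|r * y ^+ t| <= Mx.
  apply: exprn_le_bound n0 _ => //; rewrite ler_pdivlMr //.
  have := ler_wpM2l (exprn_ge0 (t * n) (normr_ge0 y)) (PK r rK).
  rewrite normrM normrX exprMn -exprM; lra.
have yx : `|y| ^+ t <= `|r * y ^+ t|.
  by rewrite normrM normrX ler_peMl ?exprn_ge0 // (le_trans K1 rK).
rewrite !le_max xM; split=> //; apply/orP; right.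
exact: exprn_le_bound t0 (le_trans yx xM).
Qed.

End Boundedness.

Lemma homog_pair_bounded {R : realType} {P Q : {poly int}} {k k' s t : nat} (c c' : R) :
  (0 < k * s)%N -> (0 < k' * s)%N ->
  (t * (size P).-1 = k * s)%N -> (t * (size Q).-1 <= k' * s)%N ->
  (forall r : R, ~ (root (map_poly intr P) r /\ root (map_poly intr Q) r)) ->
  exists M, forall x y, `|homog k s t P x y| <= c -> `|homog k' s t Q x y| <= c' ->
    `|x| <= M /\ `|y| <= M.
Proof.
move=> ks0 k's0 hP hQ PQ.
have sPR : size (map_poly intr P : {poly R}) = size P.
  by rewrite size_map_inj_poly //; apply: intr_inj.
have t0 : (0 < t)%N by move: ks0; rewrite -hP muln_gt0 => /andP[].
have n0 : (0 < (size P).-1)%N by move: ks0; rewrite -hP muln_gt0 => /andP[].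
have lP0 : 0 < `|(lead_coef P)%:~R : R|.
  by rewrite normr_gt0 intr_eq0 lead_coef_eq0 -size_poly_gt0 (leq_trans n0) ?leq_pred.
have nR0 : (0 < (size (map_poly intr P : {poly R})).-1)%N by rewrite sPR.
have [K [Mfar far]] := dehomog_bounded_far t c t0 nR0.
have [Mnear near] := dehomog_bounded_near t c c' K ks0 k's0 PQ.
pose M0 := 1 + `|c / `|(lead_coef P)%:~R : R| |.
exists (Num.max M0 (Num.max Mfar Mnear)) => x y hA hB.
have [y0 | y0] := eqVneq y 0.
  rewrite y0 homog_y0 // normrM normrX in hA.
  have xM0 : `|x| <= M0.
    by apply: exprn_le_bound n0 _; rewrite // ler_pdivlMr // mulrC.
  by rewrite y0 normr0 !le_max xM0 (le_trans _ xM0).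
have xE : x = x / y ^+ t * y ^+ t by rewrite divfK // expf_neq0.
rewrite !homog_dehomogenize ?(eq_leq hP) // !normrM !normrX in hA hB.
rewrite xE; have [rK|rK] := leP K `|x / y ^+ t|.
  rewrite -hP -sPR in hA; have [xM yM] := far _ _ rK hA.
  by rewrite !le_max xM yM !orbT.
have [xM yM] := near _ _ (ltW rK) hA hB.
by rewrite !le_max xM yM !orbT.
Qed.

Section Measure.
Context {R : realType}.
Local Notation mu := (@lebesgue_measure R).

Lemma lebesgue_measure_scale {a : R} {A : set R} : 0 < a -> measurable A ->
  mu A = (a%:E * mu ( *%R a @^-1` A))%E.
Proof.
move=> a0 mA; have ma := measurable_realfun.mulrl_measurable a.
pose nu := mscale (NngNum (ltW a0))
  (pushforward mu ( *%R a : measurableTypeR R -> measurableTypeR R)).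
rewrite (@lebesgue_measure_unique R (nu (ma setT))) //=.
move=> _ [[c d] _ <-]; rewrite /nu /mscale /pushforward /=.
rewrite [X in (_ * mu X)%E](_ : _ = `]c / a, d / a]%classic); last first.
  by apply/seteqP; split=> x /=;
    rewrite !in_itv /= ltr_pdivrMr // ler_pdivlMr // !(mulrC _ a).
rewrite !lebesgue_measure_itv /= !lte_fin ltr_pM2r ?invr_gt0 //.
case: ifP => _; last by rewrite mule0.
by rewrite -EFinD -EFinM; congr (_%:E); field; rewrite gt_eqF.
Qed.

Definition scale2 (a b : R) (p : measurableTypeR R * measurableTypeR R) :
  measurableTypeR R * measurableTypeR R := (a * p.1, b * p.2).

Lemma measurable_scale2 (a b : R) : measurable_fun setT (scale2 a b).
Proof.
apply: measurable_fun_pair; apply: measurableT_comp;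
  by [exact: measurable_realfun.mulrl_measurable | exact: measurable_fst
     | exact: measurable_snd].
Qed.

Lemma range_scale2 (a b : R) : a != 0 -> b != 0 -> range (scale2 a b) = setT.
Proof.
move=> a0 b0; apply/seteqP; split=> // -[x y] _.
by exists (x / a, y / b); rewrite // /scale2 /= !(mulrC _ (_ / _)) !divfK.
Qed.

Lemma Vol_scale2 {a b : R} {X : set (R * R)} : 0 < a -> 0 < b -> measurable X ->
  Vol X = ((a * b)%:E * Vol (scale2 a b @^-1` X))%E.
Proof.
move=> a0 b0 mX; have ab0 : 0 <= a * b by rewrite mulr_ge0 ?ltW.
pose nu := mscale (NngNum ab0) (pushforward (mu \x mu)%E (scale2 a b)).
rewrite /Vol (@product_measure_unique _ _ _ _ R mu mu (nu (measurable_scale2 a b))) //=.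
move=> A B mA mB; rewrite /nu /mscale /pushforward /=.
rewrite [X in (_ * X)%E](_ : _ = (mu \x mu)%E (( *%R a @^-1` A) `*` ( *%R b @^-1` B))) //.
rewrite product_measure1E; last 2 first.
- by rewrite -[X in measurable X]setTI; apply: measurable_realfun.mulrl_measurable.
- by rewrite -[X in measurable X]setTI; apply: measurable_realfun.mulrl_measurable.
by rewrite (lebesgue_measure_scale a0 mA) (lebesgue_measure_scale b0 mB) EFinM muleACA.
Qed.

Lemma measurable_homog k s t (p : {poly int}) :
  measurable_fun setT (fun q : R * R => homog k s t p q.1 q.2).
Proof.
apply: measurable_sum => i; apply: measurable_realfun.measurable_funM.
  apply: measurable_realfun.measurable_funM; first exact: measurable_cst.
  by apply: measurable_realfun.measurable_funX; exact: measurable_fst.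
by apply: measurable_realfun.measurable_funX; exact: measurable_snd.
Qed.

Lemma measurable_regionN s t (f g : {poly int}) (N : R) : measurable (regionN s t f g N).
Proof.
have le_meas k (p : {poly int}) (c : R) :
    measurable [set q : R * R | `|homog k s t p q.1 q.2| <= c].
  rewrite -[X in measurable X]setTI; apply: (measurable_fun_le (g := cst c)) => //.
  apply: measurableT_comp; last exact: measurable_homog.
  exact: measurable_realfun.normr_measurable.
by apply: measurableI; apply: le_meas.
Qed.
End Measure.

Lemma powR_exprn {R : realType} (N x : R) n : 0 <= N -> (N `^ x) ^+ n = N `^ (n%:R * x).
Proof. by move=> N0; rewrite -powR_mulrn ?powR_ge0 // -powRrM mulrC. Qed.

Section Regions.
Context {R : realType} {s t : nat} {f g : {poly int}}.
Hypotheses (s0 : (0 < s)%N) (hf : (t * (size f).-1 <= 2 * s)%N)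
  (hg : (t * (size g).-1 <= 3 * s)%N).

Let root6 (N : R) := N `^ (1 / (6 * s)%:R).

Lemma regionN_preimage {N : R} : 0 < N ->
  scale2 (root6 N ^+ t) (root6 N) @^-1` regionN s t f g N = regionN s t f g 1.
Proof.
move=> N0; have sR : (s%:R : R) != 0 by rewrite pnatr_eq0 -lt0n.
have root6X k j : (k * j = 6)%N -> root6 N ^+ (k * s) = N `^ (1 / j%:R).
  move=> kj; rewrite powR_exprn ?ltW // -kj; congr (_ `^ _).
  rewrite !natrM; field; rewrite sR /= !pnatr_eq0.
  by apply/andP; split; apply/negP => /eqP; lia.
have powR_div k c : 0 < k -> (N / k) `^ c = N `^ c * (1 / k) `^ c.
  by move=> k0; rewrite -powRM ?mul1r ?invr_ge0 ?ltW.
apply/funext => -[x y]; rewrite /preimage /scale2 /regionN /Aform /Bform /=.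
rewrite !homog_scale // (root6X 2 3) // (root6X 3 2) // !powR_div //.
by rewrite !normrM !(gtr0_norm (powR_gt0 _ N0)) !ler_pM2l ?powR_gt0.
Qed.

Lemma root6_exprn (N : R) : 0 < N -> N `^ (t%:R / (6 * s)%:R) = root6 N ^+ t.
Proof. by move=> N0; rewrite powR_exprn ?ltW // mul1r. Qed.

Lemma regionN_image {N : R} : 0 < N ->
  regionN s t f g N =
  [set (N `^ (t%:R / (6 * s)%:R) * p.1, N `^ (1 / (6 * s)%:R) * p.2)
     | p in regionN s t f g 1].
Proof.
move=> N0; rewrite root6_exprn // -(regionN_preimage N0) image_preimage //.
by rewrite range_scale2 // ?expf_neq0 // gt_eqF ?powR_gt0.
Qed.

Lemma Vol_regionN (N : R) : 0 < N ->
  Vol (regionN s t f g N) =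
  ((N `^ ((t + 1)%:R / (6 * s)%:R))%:E * Vol (regionN s t f g 1))%E.
Proof.
move=> N0; have r0 : 0 < root6 N by apply: powR_gt0.
rewrite (Vol_scale2 (exprn_gt0 t r0) r0 (measurable_regionN _ _ _ _ _)).
by rewrite regionN_preimage // -exprSr powR_exprn ?ltW // mul1r addn1.
Qed.

Lemma regionN_bounded (N : R) :
  (t * (size f).-1 = 2 * s)%N \/ (t * (size g).-1 = 3 * s)%N ->
  (forall r : R, ~ (root (map_poly intr f) r /\ root (map_poly intr g) r)) ->
  exists M, forall p, regionN s t f g N p -> `|p.1| <= M /\ `|p.2| <= M.
Proof.
have k0 k : (0 < k)%N -> (0 < k * s)%N by move=> ?; rewrite muln_gt0 s0 andbT.
case=> [ef|eg] fg.
  have [M hM] := homog_pair_bounded ((N / 4) `^ (1 / 3)) ((N / 27) `^ (1 / 2))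
    (k0 2 isT) (k0 3 isT) ef hg fg.
  by exists M => -[x y] [hA hB]; apply: hM.
have gf (r : R) : ~ (root (map_poly intr g) r /\ root (map_poly intr f) r).
  by case=> gr fr; apply: (fg r).
have [M hM] := homog_pair_bounded ((N / 27) `^ (1 / 2)) ((N / 4) `^ (1 / 3))
  (k0 3 isT) (k0 2 isT) eg hf gf.
by exists M => -[x y] [hA hB]; apply: hM.
Qed.

End Regions.

Theorem lemma2p3 (R : realType) (u m t : nat) (f g : {poly int}) :
  (u == 1%N) || (u == 2%N) -> (0 < m)%N -> (0 < t)%N ->
  (m == 1%N) || (u * t == 1)%N ->
  4%:R *: f ^+ 3 + 27%:R *: g ^+ 2 != 0 ->
  (forall r : R, ~ (root (map_poly intr f) r /\ root (map_poly intr g) r)) ->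
  maxdeg f g = (2 * m)%:R / (u * t)%:R ->
  let s := vsig u m in
  (forall N : R, 0 < N ->
     regionN s t f g N =
     [set (N `^ (t%:R / (6 * s)%:R) * p.1, N `^ (1 / (6 * s)%:R) * p.2)
        | p in regionN s t f g 1]) /\
  (exists M : R, forall p, regionN s t f g 1 p -> `|p.1| <= M /\ `|p.2| <= M) /\
  (forall N : R, 0 < N ->
     Vol (regionN s t f g N) =
     ((N `^ ((t + 1)%:R / (6 * s)%:R))%:E * Vol (regionN s t f g 1))%E) /\
  (exists C1 C2 : R, forall N : R, 0 < N -> forall p, regionN s t f g N p ->
     `|p.1| <= C1 * N `^ (t%:R / (6 * s)%:R) /\
     `|p.2| <= C2 * N `^ (1 / (6 * s)%:R)).
Proof.
move=> hu m0 t0 hm _ fg hmax s.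
have s0 : (0 < s)%N by rewrite /s /vsig; case: (u == 1%N); rewrite ?muln_gt0 ?m0.
have [hf hg hfg] := maxdeg_weights s0 t0 (etrans hmax (maxdeg_vsig hu hm t0)).
have [M hM] := regionN_bounded s0 hf hg (1 : R) hfg fg.
split; first exact: regionN_image.
split; first by exists M.
split; first exact: Vol_regionN.
exists M, M => N N0 q.
rewrite (regionN_image s0 hf hg N0) => -[p /hM [p1M p2M] <-] /=.
by rewrite !normrM !(gtr0_norm (powR_gt0 _ N0)) !(mulrC M) !ler_wpM2l ?powR_ge0.
Qed.
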